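(* Let $j\ge0$ be an integer and $\beta$ a real number, and for $x\in\mathbb R^d$, $t\neq0$, put $r=\|x\|$ and $$H_j^{(\beta)}(x,t)=(t^2-\|x\|^2)\,t^{2j}\,P_j^{(1,\beta)}\!\left(2\frac{r^2}{t^2}-1\right).$$ Then $$\frac{\partial}{\partial t}H_j^{(\beta)}(x,t)=2(j+1)\,t^{2j+1}P_j^{(0,\beta)}\!\left(2\frac{r^2}{t^2}-1\right),$$ $$\frac{\partial^2}{\partial t^2}H_j^{(\beta)}(x,t)=2(j+1)(4j+2\beta+3)\,t^{2j}P_j^{(0,\beta)}\!\left(2\frac{r^2}{t^2}-1\right)-4(j+1)(j+\beta+1)\,t^{2j}P_j^{(1,\beta)}\!\left(2\frac{r^2}{t^2}-1\right).$$
   Context: $P_n^{(\alpha,\beta)}$ denotes the Jacobi polynomial $P_n^{(\alpha,\beta)}(s)=\sum_{k=0}^n \frac{(\alpha+k+1)_{n-k}(n+\alpha+\beta+1)_k}{k!\,(n-k)!}\left(\frac{s-1}{2}\right)^k$, with $(a)_k$ the Pochhammer symbol. *)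

From HB Require Import structures.
From mathcomp Require Import all_boot all_order all_algebra.
From mathcomp Require Import all_classical all_reals all_analysis.
Set Implicit Arguments. Unset Strict Implicit. Unset Printing Implicit Defensive.
Import Order.TTheory GRing.Theory Num.Theory.
Local Open Scope ring_scope.

Definition pochhammer {R : ringType} (a : R) (k : nat) : R :=
  \prod_(i < k) (a + i%:R).

Definition jacobiP {R : realType} (n : nat) (al be s : R) : R :=
  \sum_(k < n.+1)
    (pochhammer (al + k%:R + 1) (n - k) * pochhammer (n%:R + al + be + 1) k)
      / ((k`!)%:R * ((n - k)`!)%:R) * ((s - 1) / 2) ^+ k.

Definition sqnorm {R : realType} {d : nat} (x : 'rV[R]_d) : R :=
  \sum_(i < d) x ord0 i ^+ 2.

Definition Hfun {R : realType} {d : nat} (j : nat) (be : R) (x : 'rV[R]_d) (t : R) : R :=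
  (t ^+ 2 - sqnorm x) * t ^+ (2 * j) * jacobiP j 1 be (2 * sqnorm x / t ^+ 2 - 1).

From HB Require Import structures.
From mathcomp Require Import all_boot all_order all_algebra.
From mathcomp Require Import all_classical all_reals all_analysis.
From mathcomp Require Import ring.

Import Order.TTheory GRing.Theory Num.Theory.
Import numFieldNormedType.Exports.

(* With u = r^2/t^2 - 1 one has (s - 1)/2 = u, so P_j^(a,b)(s) = p_a(u) for
   the polynomial p_a read off the explicit formula, and t^2 - r^2 = -t^2 u
   gives H = t^(2j+2) (-u p_1(u)).  Since du/dt = -2(1+u)/t, for every
   polynomial q the derivative of t^(m+1) q(u) is t^m ((m+1) q - 2(1+u) q')(u).
   Both formulas thus reduce to the contiguous relations
     p_1 - j u p_1 + (1+u) u p_1' = (j+1) p_0,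
     (1+u) p_0' = (j+b+1) (p_1 - p_0),
   which are checked coefficientwise on the closed forms
     [u^k] p_0 = C(j,k) (j+b+1)_k / k!,
     [u^k] p_1 = (j+1) C(j,k) (j+b+2)_k / (k+1)!. *)

Set Implicit Arguments.
Unset Strict Implicit.
Unset Printing Implicit Defensive.
Local Open Scope ring_scope.

Section Pochhammer.
Variable R : comNzRingType.
Implicit Types (x : R) (k m : nat).

Lemma pochhammerSr x k : pochhammer x k.+1 = pochhammer x k * (x + k%:R).
Proof. by rewrite /pochhammer big_ord_recr. Qed.

Lemma pochhammerSl x k : pochhammer x k.+1 = x * pochhammer (x + 1) k.
Proof.
rewrite /pochhammer big_ord_recl addr0; congr (_ * _); apply: eq_bigr => i _.
rewrite lift0 -natr1; ring.
Qed.

Lemma pochhammerS_sub x k :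
  pochhammer (x + 1) k.+1 - pochhammer x k.+1 = k.+1%:R * pochhammer (x + 1) k.
Proof. rewrite pochhammerSr pochhammerSl -natr1; ring. Qed.

Lemma fact_pochhammer m k : m`!%:R * pochhammer (m%:R + 1 : R) k = (m + k)`!%:R.
Proof.
elim: k => [|k IHk]; first by rewrite /pochhammer big_ord0 mulr1 addn0.
rewrite pochhammerSr mulrA IHk addnS factS natrM mulrC -natr1 natrD; ring.
Qed.

End Pochhammer.

Lemma natr_fact_neq0 (R : numDomainType) m : m`!%:R != 0 :> R.
Proof. by rewrite pnatr_eq0 -lt0n fact_gt0. Qed.

Lemma pochhammer_bin (R : numDomainType) k m : (k <= m)%N ->
  pochhammer (k%:R + 1 : R) (m - k) = ('C(m, k) * (m - k)`!)%:R.
Proof.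
move=> le_km; apply: (mulfI (natr_fact_neq0 R k)).
by rewrite fact_pochhammer subnKC // -(bin_fact le_km) mulnCA natrM.
Qed.

Lemma natr_bin_succ (R : numFieldType) m k :
  'C(m, k.+1)%:R = (m%:R - k%:R) / k.+1%:R * 'C(m, k)%:R :> R.
Proof.
have [le_km | lt_mk] := leqP k m; last by rewrite !bin_small ?mulr0 // ltnW.
apply: (mulfI (_ : k.+1%:R != 0)); first by rewrite pnatr_eq0.
by rewrite -natrM mul_bin_left natrM natrB // mulrA mulrCA divff ?mulr1 ?pnatr_eq0.
Qed.

Lemma coef_mulX_deriv (R : nzRingType) (p : {poly R}) k : ('X * p^`())`_k = p`_k *+ k.
Proof. by rewrite coefXM coef_deriv; case: k => [|k] //=; rewrite mulr0n. Qed.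

Section JacobiPoly.
Variable R : realType.

Definition jacobi_poly (n : nat) (al be : R) : {poly R} :=
  \poly_(k < n.+1)
    ((pochhammer (al + k%:R + 1) (n - k) * pochhammer (n%:R + al + be + 1) k)
      / ((k`!)%:R * ((n - k)`!)%:R)).

Lemma horner_jacobi_poly n al be s :
  (jacobi_poly n al be).[(s - 1) / 2] = jacobiP n al be s.
Proof. by rewrite horner_poly. Qed.

Lemma jacobiP_ratio n al be a b :
  jacobiP n al be (2 * a / b - 1) = (jacobi_poly n al be).[a / b - 1].
Proof. by rewrite -horner_jacobi_poly; congr (_.[_]); move: b^-1 => c; field. Qed.

Variables (n : nat) (be : R).

Lemma coef_jacobi_poly0 k :
  (jacobi_poly n 0 be)`_k = 'C(n, k)%:R / k`!%:R * pochhammer (n%:R + be + 1) k.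
Proof.
rewrite coef_poly ltnS; case: leqP => [le_kn | lt_nk]; last first.
  by rewrite bin_small // !mul0r.
rewrite add0r addr0 pochhammer_bin // natrM.
by field; rewrite !natr_fact_neq0.
Qed.

Lemma coef_jacobi_poly1 k :
  (jacobi_poly n 1 be)`_k =
  n.+1%:R * 'C(n, k)%:R / k.+1`!%:R * pochhammer (n%:R + be + 1 + 1) k.
Proof.
rewrite coef_poly ltnS; case: leqP => [le_kn | lt_nk]; last first.
  by rewrite bin_small // mulr0 !mul0r.
have -> : 1 + k%:R + 1 = k.+1%:R + 1 :> R by rewrite -natr1; ring.
have -> : n%:R + 1 + be + 1 = n%:R + be + 1 + 1 :> R by ring.
have binS_diag : 'C(n.+1, k.+1)%:R = n.+1%:R * 'C(n, k)%:R / k.+1%:R :> R.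
  by rewrite -natrM mul_bin_diag natrM mulrC mulKf ?pnatr_eq0.
rewrite -subSS pochhammer_bin // natrM subSS binS_diag factS natrM.
by field; rewrite addrC natr1 !natr_fact_neq0 pnatr_eq0.
Qed.

Lemma jacobi_poly0_from1 :
  jacobi_poly n 1 be - n%:R *: ('X * jacobi_poly n 1 be)
    + (1 + 'X) * ('X * (jacobi_poly n 1 be)^`())
  = n.+1%:R *: jacobi_poly n 0 be.
Proof.
apply/polyP => k; rewrite mulrDl mul1r !coefD coefN !coefZ coef_mulX_deriv.
rewrite (coefXM ('X * _)) (coefXM (jacobi_poly n 1 be)); case: k => [|k] /=.
  rewrite !(coef_jacobi_poly0, coef_jacobi_poly1) /pochhammer !big_ord0 bin0.
  by field.
rewrite coef_mulX_deriv !(coef_jacobi_poly0, coef_jacobi_poly1) natr_bin_succ.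
have -> : pochhammer (n%:R + be + 1) k.+1 =
    pochhammer (n%:R + be + 1 + 1) k.+1 - k.+1%:R * pochhammer (n%:R + be + 1 + 1) k.
  by rewrite -pochhammerS_sub opprB addrCA subrr addr0.
rewrite !factS !natrM.
move: (pochhammer _ k.+1) (pochhammer _ k) => q1 q0.
by field; rewrite natr_fact_neq0 -natrD addrC natr1 !pnatr_eq0.
Qed.

Lemma deriv_jacobi_poly0 :
  (1 + 'X) * (jacobi_poly n 0 be)^`()
  = (n%:R + be + 1) *: (jacobi_poly n 1 be - jacobi_poly n 0 be).
Proof.
apply/polyP => k; rewrite mulrDl mul1r coefD coef_mulX_deriv coef_deriv coefZ coefB.
rewrite mulrBr coef_jacobi_poly1 mulrCA -pochhammerSl pochhammerSr.
rewrite !coef_jacobi_poly0 natr_bin_succ pochhammerSr factS natrM.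
move: (pochhammer _ k) => p.
by field; rewrite natr_fact_neq0 addrC natr1 pnatr_eq0.
Qed.

End JacobiPoly.

Section Derivatives.
Variable R : realType.

Lemma near_neq0 (t : R) : t != 0 -> \forall z \near t, z != 0.
Proof.
by move=> t_neq0; apply: (@cvgr_neq0 R R^o R (nbhs t) _ id t _ t_neq0); exact: cvg_id.
Qed.

Lemma is_derive_exprn (k : nat) (t : R) :
  is_derive t 1 (fun z : R => z ^+ k) (k%:R * t ^+ k.-1).
Proof.
have := derivableP (@exprn_derivable R k t 1).
by rewrite exp_derive [_%:A]mulr1.
Qed.

Lemma is_derive_inv_sqr_shift (a t : R) : t != 0 ->
  is_derive t 1 (fun z : R => a / z ^+ 2 - 1) (- 2 * a / t ^+ 3).
Proof.
move=> t_neq0.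
have dinv := @is_deriveV R (fun z => z ^+ 2) t _ 1
  (expf_neq0 2 t_neq0) (is_derive_exprn 2 t).
have d := is_deriveB (is_deriveZ a dinv) (is_derive_cst (1 : R) t 1).
eapply is_derive_eq; [exact: d|].
by rewrite subr0 /GRing.scale /=; field.
Qed.

Definition radial_deriv (m : nat) (p : {poly R}) : {poly R} :=
  m.+1%:R *: p - 2 *: ((1 + 'X) * p^`()).

Lemma is_derive_exprS_horner (a : R) (p : {poly R}) (m : nat) (t : R) : t != 0 ->
  is_derive t 1 (fun z : R => z ^+ m.+1 * p.[a / z ^+ 2 - 1])
    (t ^+ m * (radial_deriv m p).[a / t ^+ 2 - 1]).
Proof.
move=> t_neq0.
have dp := is_derive1_comp (is_derive_poly p _) (@is_derive_inv_sqr_shift a t t_neq0).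
have d := is_deriveM (is_derive_exprn m.+1 t) dp.
eapply is_derive_eq; [exact: d|].
rewrite /radial_deriv /= !hornerE exprS /GRing.scale /=.
by field.
Qed.

Lemma radial_deriv_jacobi_poly1 (n : nat) (be : R) :
  radial_deriv (2 * n).+1 (- ('X * jacobi_poly n 1 be))
  = (2 * n.+1%:R) *: jacobi_poly n 0 be.
Proof.
rewrite /radial_deriv derivN derivM derivX mul1r -scalerA -(jacobi_poly0_from1 n be).
by rewrite !scaler_nat; ring.
Qed.

Lemma radial_deriv_jacobi_poly0 (n : nat) (be : R) :
  radial_deriv (2 * n) ((2 * n.+1%:R) *: jacobi_poly n 0 be)
  = (2 * n.+1%:R * (4 * n%:R + 2 * be + 3)) *: jacobi_poly n 0 be
    - (4 * n.+1%:R * (n%:R + be + 1)) *: jacobi_poly n 1 be.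
Proof.
rewrite /radial_deriv derivZ -scalerAr deriv_jacobi_poly0.
by rewrite -!mul_polyC !(rmorphD, rmorphM, rmorphB); ring.
Qed.

End Derivatives.

Section Hfun.
Variables (R : realType) (d n : nat) (be : R) (x : 'rV[R]_d).

Lemma Hfun_horner (z : R) : z != 0 ->
  Hfun n be x z = z ^+ (2 * n).+2 * (- ('X * jacobi_poly n 1 be)).[sqnorm x / z ^+ 2 - 1].
Proof.
move=> z_neq0; rewrite /Hfun jacobiP_ratio !hornerE !exprS.
by field.
Qed.

Lemma is_derive_Hfun (t : R) : t != 0 ->
  is_derive t 1 (Hfun n be x)
    (2 * n.+1%:R * t ^+ (2 * n + 1) * jacobiP n 0 be (2 * sqnorm x / t ^+ 2 - 1)).
Proof.
move=> t_neq0.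
have := is_derive_exprS_horner (sqnorm x) (- ('X * jacobi_poly n 1 be)) (2 * n).+1 t_neq0.
rewrite radial_deriv_jacobi_poly1 hornerZ -jacobiP_ratio addn1 mulrCA mulrA.
apply: near_eq_is_derive; near=> z; rewrite Hfun_horner //.
by near: z; exact: near_neq0.
Unshelve. all: by end_near.
Qed.

Lemma is_derive_derive1_Hfun (t : R) : t != 0 ->
  is_derive t 1 (derive1 (Hfun n be x))
    (2 * n.+1%:R * (4 * n%:R + 2 * be + 3) * t ^+ (2 * n)
        * jacobiP n 0 be (2 * sqnorm x / t ^+ 2 - 1)
     - 4 * n.+1%:R * (n%:R + be + 1) * t ^+ (2 * n)
        * jacobiP n 1 be (2 * sqnorm x / t ^+ 2 - 1)).
Proof.
move=> t_neq0.
have dF := is_derive_exprS_horner (sqnorm x) ((2 * n.+1%:R) *: jacobi_poly n 0 be)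
  (2 * n) t_neq0.
rewrite radial_deriv_jacobi_poly0 hornerD hornerN !hornerZ -!jacobiP_ratio in dF.
eapply near_eq_is_derive; last first.
  by apply: is_derive_eq dF _; ring.
near=> z.
have z_neq0 : z != 0 by near: z; exact: near_neq0.
rewrite derive1E (@derive_val _ _ _ _ _ _ _ (is_derive_Hfun z_neq0)).
by rewrite hornerZ -jacobiP_ratio addn1; ring.
Unshelve. all: by end_near.
Qed.

End Hfun.

Theorem lemma2p4 (R : realType) (d j : nat) (be : R) (x : 'rV[R]_d) (t : R) :
  t != 0 ->
  is_derive t 1 (Hfun j be x)
    (2 * (j.+1)%:R * t ^+ (2 * j + 1) * jacobiP j 0 be (2 * sqnorm x / t ^+ 2 - 1))
  /\
  is_derive t 1 (derive1 (Hfun j be x))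
    (2 * (j.+1)%:R * (4 * j%:R + 2 * be + 3) * t ^+ (2 * j)
        * jacobiP j 0 be (2 * sqnorm x / t ^+ 2 - 1)
     - 4 * (j.+1)%:R * (j%:R + be + 1) * t ^+ (2 * j)
        * jacobiP j 1 be (2 * sqnorm x / t ^+ 2 - 1)).
Proof.
by move=> t_neq0; split; [exact: is_derive_Hfun | exact: is_derive_derive1_Hfun].
Qed.
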